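(* For any $n$-qubit pure states $\ket{\psi},\ket{\phi}$, $$|\mathcal{C}(\ket{\psi})-\mathcal{C}(\ket{\phi})|\le\sqrt2\,D_{tr}(\ket{\psi}\!\bra{\psi},\ket{\phi}\!\bra{\phi}).$$
   Context: $D_{tr}(\rho,\sigma)=\frac12\|\rho-\sigma\|_1$ is the trace distance. $\mathcal{C}(\ket{\psi})=1-\frac{1}{2^{n}}\sum_{\alpha\subseteq [n]}\mathrm{Tr}[\rho_\alpha^2]$, with $\rho_\alpha$ the reduced state of $\ket{\psi}$ on $\alpha$ and $\mathrm{Tr}[\rho_\emptyset^2]=1$. *)

From HB Require Import structures.
From mathcomp Require Import all_boot all_order all_algebra.
Set Implicit Arguments. Unset Strict Implicit. Unset Printing Implicit Defensive.
Import Order.TTheory GRing.Theory Num.Theory.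
Local Open Scope ring_scope.

(* Computational basis of n qubits: bit strings x : 'I_n -> bool. *)
Definition bits (n : nat) := {ffun 'I_n -> bool}.

Section Quantum.
Variable C : numClosedFieldType.
Variable n : nat.

(* A pure state is given by its amplitudes in the computational basis. *)
Definition is_pure_state (psi : bits n -> C) : Prop :=
  \sum_(x : bits n) `|psi x| ^+ 2 = 1.

(* Matrices on the 2^n-dimensional Hilbert space, indexed via enum_val. *)
Definition dim := #|{: bits n}|.

Definition proj (psi : bits n -> C) : 'M[C]_dim :=
  \matrix_(i, j) (psi (enum_val i) * (psi (enum_val j))^*).

Definition adjmx (m : nat) (A : 'M[C]_m) : 'M[C]_m := map_mx Num.conj A^T.

Definition eigenvalues (m : nat) (A : 'M[C]_m) : seq C :=
  sval (closed_field_poly_normal (char_poly A)).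

(* Trace norm: sum of singular values = sum of square roots of the
   eigenvalues of A^dagger A. *)
Definition trace_norm (m : nat) (A : 'M[C]_m) : C :=
  \sum_(z <- eigenvalues (adjmx A *m A)) sqrtC z.

Definition trace_dist (m : nat) (rho sigma : 'M[C]_m) : C :=
  trace_norm (rho - sigma) / 2.

(* Reduced state on alpha.  Basis states of the subsystem alpha are
   represented by bit strings vanishing outside alpha; glue a c puts
   a on alpha and c on the complement. *)
Definition supported (alpha : {set 'I_n}) (x : bits n) : bool :=
  [forall i, (i \notin alpha) ==> ~~ x i].

Definition glue (alpha : {set 'I_n}) (a c : bits n) : bits n :=
  [ffun i => if i \in alpha then a i else c i].

Definition reduced (psi : bits n -> C) (alpha : {set 'I_n}) (a b : bits n) : C :=
  \sum_(c : bits n | supported (~: alpha) c)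
     psi (glue alpha a c) * (psi (glue alpha b c))^*.

Definition purity (psi : bits n -> C) (alpha : {set 'I_n}) : C :=
  \sum_(a : bits n | supported alpha a) \sum_(b : bits n | supported alpha b)
     reduced psi alpha a b * reduced psi alpha b a.

Definition lin_ent (psi : bits n -> C) : C :=
  1 - (2 ^+ n)^-1 * \sum_(alpha : {set 'I_n}) purity psi alpha.

End Quantum.

From HB Require Import structures.
From mathcomp Require Import all_boot all_order all_algebra ring.
Set Implicit Arguments. Unset Strict Implicit. Unset Printing Implicit Defensive.
Import Order.TTheory GRing.Theory Num.Theory.
Local Open Scope ring_scope.

(* Write Psi = psi (x) psi.  Each purity Tr[rho_alpha^2] equals <Psi, S_alpha Psi>,
   where S_alpha exchanges the alpha-parts of the two copies, so
   C(psi) = 1 - <Psi, Pi Psi> with Pi = 2^-n sum_alpha S_alpha.  The S_alpha are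
   self-adjoint and form a group (S_alpha S_beta = S_(alpha xor beta)), hence Pi
   is an orthogonal projector.  For unit vectors X, Y and such a projector,
   |<X, Pi X> - <Y, Pi Y>|^2 <= 1 - |<X, Y>|^2: Cauchy-Schwarz applied to X - Y
   and to the reflection (2 Pi - 1)(X + Y), after a phase makes <X, Y> >= 0.
   For pure states, A = |psi><psi| - |phi><phi| satisfies (A^* A)^2 = L A^* A with
   L = 1 - F, F = |<psi, phi>|^2, so D_tr = sqrt(1 - F).  As <Psi, Phi> = <psi, phi>^2,
   we get |C(psi) - C(phi)|^2 <= 1 - F^2 <= 2 (1 - F) = 2 D_tr^2. *)

Section InnerProduct.
Variables (C : numClosedFieldType) (I : finType).

Definition dotp (u v : I -> C) : C := \sum_i u i * (v i)^*.

Lemma dotpC (u v : I -> C) : dotp v u = (dotp u v)^*.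
Proof.
rewrite /dotp rmorph_sum; apply: eq_bigr => i _.
by rewrite rmorphM /= conjCK mulrC.
Qed.

Lemma dotpp_ge0 (u : I -> C) : 0 <= dotp u u.
Proof. by apply: sumr_ge0 => i _; rewrite -normCK exprn_ge0. Qed.

Lemma dotpp_eq0 (u : I -> C) : dotp u u = 0 -> forall i, u i = 0.
Proof.
move=> /psumr_eq0P u0 i; apply/eqP.
rewrite -normr_eq0 -sqrf_eq0 normCK u0 // => j _.
by rewrite -normCK exprn_ge0.
Qed.

Local Notation V := {ffun I -> C^o}.

Lemma dotpDl (u v w : V) : dotp (u + v) w = dotp u w + dotp v w.
Proof. by rewrite /dotp -big_split; apply: eq_bigr => i _; rewrite ffunE mulrDl. Qed.

Lemma dotpBl (u v w : V) : dotp (u - v) w = dotp u w - dotp v w.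
Proof. by rewrite /dotp -sumrB; apply: eq_bigr => i _; rewrite !ffunE mulrBl. Qed.

Lemma dotpZl (a : C) (u v : V) : dotp (a *: u) v = a * dotp u v.
Proof. by rewrite /dotp mulr_sumr; apply: eq_bigr => i _; rewrite ffunE mulrA. Qed.

Lemma dotpDr (u v w : V) : dotp u (v + w) = dotp u v + dotp u w.
Proof. by rewrite dotpC dotpDl rmorphD /= -!dotpC. Qed.

Lemma dotpBr (u v w : V) : dotp u (v - w) = dotp u v - dotp u w.
Proof. by rewrite dotpC dotpBl rmorphB /= -!dotpC. Qed.

Lemma dotpZr (a : C) (u v : V) : dotp u (a *: v) = a^* * dotp u v.
Proof. by rewrite dotpC dotpZl rmorphM /= -dotpC. Qed.

Lemma dotp_suml (J : Type) (r : seq J) (Q : pred J) (F : J -> V) (v : V) :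
  dotp (\sum_(j <- r | Q j) F j) v = \sum_(j <- r | Q j) dotp (F j) v.
Proof.
apply: (big_morph (fun u : V => dotp u v)) => [u w|]; first exact: dotpDl.
by rewrite /dotp big1 // => i _; rewrite ffunE mul0r.
Qed.

Lemma dotp_sumr (J : Type) (r : seq J) (Q : pred J) (F : J -> V) (u : V) :
  dotp u (\sum_(j <- r | Q j) F j) = \sum_(j <- r | Q j) dotp u (F j).
Proof.
by rewrite dotpC dotp_suml rmorph_sum; apply: eq_bigr => j _; rewrite /= -dotpC.
Qed.

(* Expand [0 <= |B u - (r / 2) v|^2]. *)
Lemma dotp_Re_cauchy_schwarz (u v : V) :
  (dotp u v + dotp v u) ^+ 2 <= 4 * dotp u u * dotp v v.
Proof.
set r := dotp u v + dotp v u; set A := dotp u u; set B := dotp v v.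
have [B0|B_neq0] := eqVneq B 0.
  have v0 w : dotp w v = 0.
    by rewrite /dotp big1 // => i _; rewrite (dotpp_eq0 B0) rmorph0 mulr0.
  by rewrite /r v0 dotpC v0 rmorph0 B0 addr0 expr0n mulr0.
have B_gt0 : 0 < B by rewrite lt_def B_neq0 dotpp_ge0.
have B_real : B^* = B by rewrite geC0_conj // dotpp_ge0.
have r_real : r^* = r by rewrite rmorphD /= -!dotpC addrC.
have := dotpp_ge0 (B *: u - (r / 2) *: v).
rewrite !(dotpBl, dotpBr, dotpZl, dotpZr) rmorphM fmorphV /= r_real B_real.
rewrite conjC_nat -/A -/B.
have -> : B * (B * A) - B * (r / 2 * dotp u v) -
    (r / 2 * (B * dotp v u) - r / 2 * (r / 2 * B)) = B / 4 * (4 * A * B - r ^+ 2).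
  by rewrite /r; field.
by rewrite pmulr_rge0 ?divr_gt0 ?ltr0n // subr_ge0.
Qed.

End InnerProduct.

Lemma dotp_enum_val (C : numClosedFieldType) (I : finType) (u v : I -> C) :
  dotp (u \o @enum_val _ {: I}) (v \o enum_val) = dotp u v.
Proof. by rewrite /dotp (big_enum_val (fun i => u i * (v i)^*)). Qed.

Lemma dotpp_pure_state (C : numClosedFieldType) n (psi : bits n -> C) :
  is_pure_state psi -> dotp psi psi = 1.
Proof. by rewrite /dotp => <-; apply: eq_bigr => x _; rewrite normCK. Qed.

Section ProjectorExpectation.
Variables (C : numClosedFieldType) (I : finType).
Local Notation V := {ffun I -> C^o}.
(* Without it, [dotp] applied to vectors of [V] would be taken over [C^o]. *)
Local Notation dotp := (@dotp C I).
Variable P : {linear V -> V}.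
Hypothesis P_selfadjoint : forall u v : V, dotp u (P v) = dotp (P u) v.
Hypothesis P_idem : forall v : V, P (P v) = P v.

Lemma dotp_reflection (w : V) : dotp (2 *: P w - w) (2 *: P w - w) = dotp w w.
Proof.
rewrite !(dotpBl, dotpBr, dotpZl, dotpZr) conjC_nat -!P_selfadjoint P_idem.
ring.
Qed.

Lemma expectation_real (u : V) : (dotp u (P u))^* = dotp u (P u).
Proof. by rewrite -dotpC P_selfadjoint. Qed.

(* With [u = X - Y] and [w = X + Y], [2 Re <(2 P - 1) w, u>] is four times the
   difference of expectations, and the reflection [2 P - 1] preserves [|w|]. *)
Lemma expectationB_sqr_le (X Y : V) : dotp X X = 1 -> dotp Y Y = 1 ->
  (dotp X (P X) - dotp Y (P Y)) ^+ 2 <= 1 - 'Re (dotp X Y) ^+ 2.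
Proof.
move=> X1 Y1.
set c := dotp X Y; set d := dotp X (P X) - dotp Y (P Y).
have Yc : dotp Y X = c^* by rewrite dotpC.
have := dotp_Re_cauchy_schwarz (2 *: P (X + Y) - (X + Y)) (X - Y).
rewrite dotp_reflection.
have -> : dotp (X + Y) (X + Y) = 2 + (c + c^*).
  by rewrite !(dotpDl, dotpDr) X1 Y1 Yc -/c; ring.
have -> : dotp (X - Y) (X - Y) = 2 - (c + c^*).
  by rewrite !(dotpBl, dotpBr) X1 Y1 Yc -/c; ring.
have -> : dotp (2 *: P (X + Y) - (X + Y)) (X - Y) +
          dotp (X - Y) (2 *: P (X + Y) - (X + Y)) = 4 * d.
  rewrite (linearD P) !(dotpBl, dotpBr, dotpDl, dotpDr, dotpZl, dotpZr) conjC_nat.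
  by rewrite -!P_selfadjoint X1 Y1 /d; ring.
rewrite ReE -subr_ge0 => CS; rewrite -subr_ge0.
have -> : 1 - ((c + c^*) / 2) ^+ 2 - d ^+ 2 =
          (4 * (2 + (c + c^*)) * (2 - (c + c^*)) - (4 * d) ^+ 2) / 16 by field.
by rewrite divr_ge0 ?ler0n.
Qed.

Lemma expectationB_norm_le (X Y : V) : dotp X X = 1 -> dotp Y Y = 1 ->
  `|dotp X (P X) - dotp Y (P Y)| ^+ 2 <= 1 - `|dotp X Y| ^+ 2.
Proof.
move=> X1 Y1.
rewrite real_normK; last by rewrite CrealE rmorphB /= !expectation_real.
set c := dotp X Y; have [c0|c_neq0] := eqVneq c 0.
  by have := expectationB_sqr_le X1 Y1; rewrite -/c c0 normr0 ReE rmorph0 addr0 mul0r.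
have nc_neq0 : `|c| != 0 by rewrite normr_eq0.
pose w := c / `|c|.
have w_unit : w * w^* = 1.
  by rewrite -normCK normf_div normr_id divff ?expr1n.
have wY1 : dotp (w *: Y) (w *: Y) = 1 by rewrite dotpZl dotpZr Y1 mulr1.
have Xw : dotp X (w *: Y) = `|c|.
  by rewrite dotpZr rmorphM fmorphV /= conj_normC -/c mulrAC -normCKC expr2 mulfK.
have := expectationB_sqr_le X1 wY1.
rewrite linearZZ dotpZl dotpZr mulrA w_unit mul1r Xw.
by have /Creal_ReP -> := normr_real c.
Qed.

End ProjectorExpectation.

Section Tensor.
Variables (C : numClosedFieldType) (I J : finType).

Definition tensor (f : I -> C) (g : J -> C) : {ffun I * J -> C} :=
  [ffun p => f p.1 * g p.2].

Lemma dotp_tensor (f f' : I -> C) (g g' : J -> C) :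
  dotp (tensor f g) (tensor f' g') = dotp f f' * dotp g g'.
Proof.
transitivity (\sum_i \sum_j f i * g j * (f' i * g' j)^*).
  by rewrite pair_bigA; apply: eq_bigr => -[i j] _; rewrite !ffunE.
rewrite mulr_suml; apply: eq_bigr => i _.
rewrite mulr_sumr; apply: eq_bigr => j _.
by rewrite rmorphM /=; ring.
Qed.

End Tensor.

Section SubsystemSwap.
Variables (C : numClosedFieldType) (n : nat).
Local Notation bits := (bits n).

Definition restrict (al : {set 'I_n}) (x : bits) : bits :=
  [ffun i => (i \in al) && x i].

Lemma supported_restrict al x : supported al (restrict al x).
Proof. by apply/forallP => i; apply/implyP; rewrite ffunE => /negbTE ->. Qed.

Lemma restrict_glue al (a c : bits) : supported al a -> restrict al (glue al a c) = a.
Proof.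
move=> /forallP a_al; apply/ffunP => i; rewrite !ffunE.
by case: ifP => // i_al; have := a_al i; rewrite i_al => /negbTE ->.
Qed.

Lemma restrictC_glue al (a c : bits) :
  supported (~: al) c -> restrict (~: al) (glue al a c) = c.
Proof.
move=> /forallP c_al; apply/ffunP => i; rewrite !ffunE inE.
by case: ifP => //= i_al; have := c_al i; rewrite inE i_al => /negbTE ->.
Qed.

Lemma glue_restrict al (x : bits) : glue al (restrict al x) (restrict (~: al) x) = x.
Proof. by apply/ffunP => i; rewrite !ffunE inE; case: (i \in al). Qed.

Lemma glue_glue al (a b c d : bits) : glue al (glue al a b) (glue al c d) = glue al a d.
Proof. by apply/ffunP => i; rewrite !ffunE; case: (i \in al). Qed.

Lemma glue_same al (x : bits) : glue al x x = x.
Proof. by apply/ffunP => i; rewrite !ffunE; case: (i \in al). Qed.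

Lemma sum_glue al (F : bits -> C) :
  \sum_(a | supported al a) \sum_(c | supported (~: al) c) F (glue al a c) = \sum_x F x.
Proof.
rewrite pair_big_dep (reindex_onto (fun x => (restrict al x, restrict (~: al) x))
  (fun p => glue al p.1 p.2)) /=; last first.
  by move=> [a c] /andP[a_al c_al]; rewrite restrict_glue // restrictC_glue.
by apply: eq_big => x; rewrite ?supported_restrict glue_restrict ?eqxx.
Qed.

Definition swap al (p : bits * bits) : bits * bits :=
  (glue al p.2 p.1, glue al p.1 p.2).

Lemma swapK al : involutive (swap al).
Proof. by move=> [x y]; rewrite /swap /= !glue_glue !glue_same. Qed.

Local Notation V := {ffun bits * bits -> C^o}.
Local Notation dotp := (@dotp C _).

Definition swap_op al (v : V) : V := [ffun p => v (swap al p)].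

Lemma swap_op_is_linear al : linear (swap_op al).
Proof. by move=> a u v; apply/ffunP => p; rewrite !ffunE. Qed.

HB.instance Definition _ al :=
  GRing.isLinear.Build C V V *:%R (swap_op al) (swap_op_is_linear al).

Lemma purityE (psi : bits -> C) al :
  purity psi al = dotp (tensor psi psi) (swap_op al (tensor psi psi)).
Proof.
transitivity
  (\sum_x \sum_y psi x * psi y * (psi (glue al y x) * psi (glue al x y))^*).
  rewrite /purity -[RHS](sum_glue al); apply: eq_bigr => a a_al.
  under [RHS]eq_bigr => c _ do rewrite -(sum_glue al).
  rewrite /reduced; under [LHS]eq_bigr => b _ do rewrite big_distrlr /=.
  rewrite exchange_big; apply: eq_bigr => c c_al; apply: eq_bigr => b b_al.
  by apply: eq_bigr => c' c'_al; rewrite !glue_glue rmorphM /=; ring.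
by rewrite /dotp pair_bigA; apply: eq_bigr => -[x y] _; rewrite !ffunE.
Qed.

Lemma dotp_swap_op al (u v : V) : dotp u (swap_op al v) = dotp (swap_op al u) v.
Proof.
rewrite /dotp [LHS](reindex_inj (inv_inj (swapK al))).
by apply: eq_bigr => p _; rewrite !ffunE swapK.
Qed.

Definition symdiff (al be : {set 'I_n}) : {set 'I_n} :=
  [set i | (i \in al) (+) (i \in be)].

Lemma symdiffK al : involutive (symdiff al).
Proof. by move=> be; apply/setP => i; rewrite !inE addKb. Qed.

Lemma swap_op_comp al be (v : V) :
  swap_op al (swap_op be v) = swap_op (symdiff be al) v.
Proof.
apply/ffunP => -[x y]; rewrite !ffunE; congr (v (_, _));
by apply/ffunP => i; rewrite !ffunE inE; case: (i \in al); case: (i \in be).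
Qed.

Definition swap_avg (v : V) : V := (2 ^+ n)^-1 *: \sum_al swap_op al v.

Lemma swap_avg_is_linear : linear swap_avg.
Proof.
move=> a u v; rewrite /swap_avg.
have -> : \sum_al swap_op al (a *: u + v) =
          a *: \sum_al swap_op al u + \sum_al swap_op al v.
  by rewrite scaler_sumr -big_split; apply: eq_bigr => al _; rewrite linearP.
by rewrite scalerDr !scalerA mulrC.
Qed.

HB.instance Definition _ :=
  GRing.isLinear.Build C V V *:%R swap_avg swap_avg_is_linear.

Lemma conj_inv_exp2 : ((2 ^+ n)^-1 : C)^* = (2 ^+ n)^-1.
Proof. by rewrite geC0_conj // invr_ge0 exprn_ge0 ?ler0n. Qed.

Lemma swap_avg_selfadjoint (u v : V) : dotp u (swap_avg v) = dotp (swap_avg u) v.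
Proof.
rewrite dotpZr dotpZl conj_inv_exp2 dotp_sumr dotp_suml.
by congr (_ * _); apply: eq_bigr => al _; apply: dotp_swap_op.
Qed.

Lemma card_subsets : #|{set 'I_n}| = (2 ^ n)%N.
Proof. by rewrite -cardsT -powersetT card_powerset cardsT card_ord. Qed.

(* The swaps form a group: [swap_op al] only permutes the terms of the average. *)
Lemma swap_avg_swap_op al (v : V) : swap_avg (swap_op al v) = swap_avg v.
Proof.
rewrite /swap_avg (reindex_inj (inv_inj (symdiffK al))).
by congr (_ *: _); apply: eq_bigr => be _; rewrite swap_op_comp symdiffK.
Qed.

Lemma swap_avg_idem (v : V) : swap_avg (swap_avg v) = swap_avg v.
Proof.
rewrite {2}/swap_avg linearZZ linear_sum.
under eq_bigr do rewrite /= swap_avg_swap_op.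
rewrite sumr_const card_subsets -scaler_nat natrX (scalerA ((2 ^+ n)^-1 : C)) mulVf.
  exact: scale1r.
by rewrite expf_neq0 // pnatr_eq0.
Qed.

Lemma lin_entE (psi : bits -> C) :
  lin_ent psi = 1 - dotp (tensor psi psi) (swap_avg (tensor psi psi)).
Proof.
rewrite /lin_ent dotpZr conj_inv_exp2 dotp_sumr.
by congr (1 - _ * _); apply: eq_bigr => al _; rewrite purityE.
Qed.

End SubsystemSwap.

Section Eigenvalues.
Variables (C : numClosedFieldType) (m : nat).

Lemma char_poly_eigenvalues (A : 'M[C]_m) :
  char_poly A = \prod_(z <- eigenvalues A) ('X - z%:P).
Proof.
rewrite /eigenvalues; case: closed_field_poly_normal => r /= ->.
by rewrite (monicP (char_poly_monic A)) scale1r.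
Qed.

Lemma sum_eigenvalues (A : 'M[C]_m) : (0 < m)%N -> \sum_(z <- eigenvalues A) z = \tr A.
Proof.
move=> m_gt0; have size_ev : size (eigenvalues A) = m.
  by have := size_char_poly A; rewrite char_poly_eigenvalues size_prod_XsubC => -[].
have := @coefPn_prod_XsubC _ (eigenvalues A); rewrite size_ev -lt0n m_gt0.
by rewrite -char_poly_eigenvalues char_poly_trace // => /(_ isT) /oppr_inj.
Qed.

Lemma eigenvalue_quadratic (A : 'M[C]_m) (L z : C) :
  A *m A = L *: A -> z \in eigenvalues A -> z = 0 \/ z = L.
Proof.
move=> AA z_ev.
have : root (char_poly A) z by rewrite char_poly_eigenvalues root_prod_XsubC.
rewrite -eigenvalue_root_char => /eigenvalueP [v vA v_neq0].
have : (z * z) *: v = (z * L) *: v.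
  by rewrite -scalerA -vA scalemxAl -vA -mulmxA AA -scalemxAr vA scalerA mulrC.
move/eqP; rewrite -subr_eq0 -scalerBl scaler_eq0 (negbTE v_neq0) orbF.
by rewrite -mulrBr mulf_eq0 subr_eq0 => /orP[] /eqP; [left | right].
Qed.

(* The spectrum lies in [{0, L}], where [sqrtC z * L = z * sqrtC L]; for [L = 0]
   both sides vanish, the right one because [x / 0 = 0]. *)
Lemma sum_sqrt_eigenvalues_quadratic (A : 'M[C]_m) (L : C) : (0 < m)%N ->
  A *m A = L *: A -> \sum_(z <- eigenvalues A) sqrtC z = \tr A / L * sqrtC L.
Proof.
move=> m_gt0 AA; have [L0|L_neq0] := eqVneq L 0.
  rewrite L0 sqrtC0 mulr0 big_seq big1 // => z /(eigenvalue_quadratic AA).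
  by rewrite L0 => -[] ->; rewrite sqrtC0.
apply: (mulIf L_neq0).
have -> : \tr A / L * sqrtC L * L = \tr A * sqrtC L by field.
rewrite -sum_eigenvalues // !mulr_suml big_seq [RHS]big_seq.
apply: eq_bigr => z /(eigenvalue_quadratic AA) [] ->; first by rewrite sqrtC0 !mul0r.
exact: mulrC.
Qed.

End Eigenvalues.

Section PureTraceDistance.
Variables (C : numClosedFieldType) (m : nat).

Definition outer (x y : 'I_m -> C) : 'M[C]_m := \matrix_(i, j) (x i * (y j)^*).

Lemma mul_outer (x y z w : 'I_m -> C) : outer x y *m outer z w = dotp z y *: outer x w.
Proof.
apply/matrixP => i j; rewrite !mxE /dotp mulr_suml.
by apply: eq_bigr => k _; rewrite !mxE; ring.
Qed.

Lemma adjmx_outer (x y : 'I_m -> C) : adjmx (outer x y) = outer y x.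
Proof. by apply/matrixP => i j; rewrite !mxE rmorphM /= conjCK mulrC. Qed.

Lemma adjmxB (A B : 'M[C]_m) : adjmx (A - B) = adjmx A - adjmx B.
Proof. by apply/matrixP => i j; rewrite !mxE rmorphB. Qed.

Lemma mxtrace_outer (x y : 'I_m -> C) : \tr (outer x y) = dotp x y.
Proof. by apply: eq_bigr => i _; rewrite mxE. Qed.

Lemma trace_dist_outer (a b : 'I_m -> C) : dotp a a = 1 -> dotp b b = 1 ->
  trace_dist (outer a a) (outer b b) = sqrtC (1 - `|dotp a b| ^+ 2).
Proof.
move=> a1 b1; have m_gt0 : (0 < m)%N.
  move: a b a1 b1; case: m => // a b.
  by rewrite /dotp big_ord0 => /esym/eqP; rewrite oner_eq0.
set s := dotp a b; have b_a : dotp b a = s^* by rewrite dotpC.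
set X := outer a a - outer b b; set L := 1 - `|s| ^+ 2.
have X_adj : adjmx X = X by rewrite adjmxB !adjmx_outer.
have XX : X *m X = outer a a - s^* *: outer a b - s *: outer b a + outer b b.
  rewrite mulmxBl !mulmxBr !mul_outer a1 b1 b_a -/s !scale1r.
  by apply/matrixP => i j; rewrite !mxE; ring.
have XXX : X *m (X *m X) = L *: X.
  rewrite XX mulmxBl !(mulmxDr, mulmxBr, mulmxN) -!scalemxAr !mul_outer.
  rewrite a1 b1 b_a -/s /X.
  by apply/matrixP => i j; rewrite !mxE /L normCK; ring.
have M2 : (X *m X) *m (X *m X) = L *: (X *m X).
  by rewrite -mulmxA XXX -scalemxAr.
have trM : \tr (X *m X) = 2 * L.
  rewrite XX !(mxtraceD, raddfN) /= !mxtraceZ !mxtrace_outer a1 b1 b_a -/s /L normCK.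
  by ring.
rewrite /trace_dist /trace_norm X_adj (sum_sqrt_eigenvalues_quadratic m_gt0 M2) trM.
have [L0|L_neq0] := eqVneq L 0; first by rewrite L0 sqrtC0 !(mulr0, mul0r).
by field.
Qed.

End PureTraceDistance.

Lemma le_sqrt2_mul_sqrt1B (C : numClosedFieldType) (e f : C) :
  0 <= e -> 0 <= f -> e ^+ 2 <= 1 - f ^+ 2 -> e <= sqrtC 2 * sqrtC (1 - f).
Proof.
move=> e_ge0 f_ge0 ef.
have f_le1 : f <= 1.
  by rewrite -(expr_le1 (n := 2)) // -subr_ge0 (le_trans (exprn_ge0 2 e_ge0) ef).
have f1_ge0 : 0 <= 1 - f by rewrite subr_ge0.
rewrite -sqrtCM ?nnegrE ?ler0n // -(sqrCK e_ge0).
rewrite ler_sqrtC ?nnegrE ?exprn_ge0 ?mulr_ge0 ?ler0n //.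
apply: le_trans ef _; rewrite -subr_ge0.
have -> : 2 * (1 - f) - (1 - f ^+ 2) = (1 - f) ^+ 2 by ring.
exact: exprn_ge0.
Qed.

Theorem mainTheorem14 (C : numClosedFieldType) (n : nat)
    (psi phi : bits n -> C) :
  is_pure_state psi -> is_pure_state phi ->
  `|lin_ent psi - lin_ent phi| <= sqrtC 2 * trace_dist (proj psi) (proj phi).
Proof.
move=> psi1 phi1.
have tensor1 (f : bits n -> C) : is_pure_state f -> dotp (tensor f f) (tensor f f) = 1.
  by move=> f1; rewrite dotp_tensor dotpp_pure_state ?mulr1.
have -> : trace_dist (proj psi) (proj phi) = sqrtC (1 - `|dotp psi phi| ^+ 2).
  by rewrite (@trace_dist_outer _ _ (psi \o enum_val) (phi \o enum_val))
     ?dotp_enum_val ?dotpp_pure_state.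
set Psi := tensor psi psi; set Phi := tensor phi phi.
have -> : lin_ent psi - lin_ent phi =
          - (dotp Psi (swap_avg Psi) - dotp Phi (swap_avg Phi)).
  by rewrite !lin_entE; ring.
rewrite normrN; apply: le_sqrt2_mul_sqrt1B; rewrite ?exprn_ge0 //.
have -> : `|dotp psi phi| ^+ 2 = `|dotp Psi Phi| by rewrite dotp_tensor normrM.
by have := expectationB_norm_le (@swap_avg_selfadjoint C n) (@swap_avg_idem C n)
  (tensor1 _ psi1) (tensor1 _ phi1).
Qed.
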